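(* Let $(\chi,u)$ be a rooted chirotope and let $m$ be the minimal degree of $v$ in a weak triangulation of $(\chi,u)$. Then a weak triangulation $\Delta$ of $(\chi,u)$ is the extension of a triangulation of $\chi$ if and only if $v$ has degree $m$ in $\Delta$.
   Context: A chirotope on a finite set $E$ is a map $\chi$ from ordered triples of distinct elements to $\{-1,1\}$ satisfying alternating symmetry, interiority and transitivity axioms. A rooted chirotope $(\chi,u)$ is a chirotope $\chi$ on $X\cup\{u\}$ with $u$ an extreme element (there is $y\neq u$ with $\chi(u,y,z)$ constant over all other $z$). A segment is a pair of distinct elements; two segments sharing an endpoint never cross, and segments $xy$, $zt$ with four distinct endpoints cross iff $\chi(x,y,z)=-\chi(x,y,t)$ and $\chi(z,t,x)=-\chi(z,t,y)$. A triangulation of $\chi$ is an inclusion-maximal set of pairwise non-crossing segments. Add a new element $v$ and set $\chi(x,y,v)=-\chi(x,y,u)$ for $x,y\in X$ ($\chi(x,u,v)$ stays undefined). For segments with endpoints in $X\cup\{u,v\}$ other than $uv$, crossing is defined by the same rule, where a segment containing $u$ and a segment containing $v$ are never crossing (so only defined values are used). A weak triangulation of $(\chi,u)$ is a maximal non-crossing collection of segments with endpoints in $X\cup\{u,v\}$ not containing the segment $uv$. Every triangulation $\Delta$ of $\chi$ extends uniquely to a weak triangulation, its extension, obtained by adding all segments $vx$ ($x\in X$) crossing no segment of $\Delta$. The degree of a vertex in $\Delta$ is the number of segments of $\Delta$ incident to it. *)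

From mathcomp Require Import all_boot.
Set Implicit Arguments. Unset Strict Implicit. Unset Printing Implicit Defensive.

(* A sign function: s x y z = true encodes the value +1, false encodes -1.
   Only its values on triples of pairwise distinct elements are meaningful. *)

Section Chirotope.
Variable T : finType.
Variable chi : T -> T -> T -> bool.

Definition distinct3 (x y z : T) := uniq [:: x; y; z].

(* Knuth-style axioms for (uniform, acyclic rank 3) chirotopes. *)
Definition alternating_symmetry :=
  forall x y z, distinct3 x y z ->
    chi x y z = chi y z x /\ chi x y z = ~~ chi y x z.

Definition interiority :=
  forall p q r t, uniq [:: p; q; r; t] ->
    chi t q r -> chi p t r -> chi p q t -> chi p q r.

Definition transitivity :=
  forall t s p q r, uniq [:: t; s; p; q; r] ->
    chi t s p -> chi t s q -> chi t s r -> chi t p q -> chi t q r -> chi t p r.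

Definition chirotope := [/\ alternating_symmetry, interiority & transitivity].

Definition extreme (u : T) :=
  exists2 y, y != u &
    forall z z', distinct3 u y z -> distinct3 u y z' -> chi u y z = chi u y z'.

End Chirotope.

Definition crossb (T : finType) (s : T -> T -> T -> bool) (A B : {set T}) : bool :=
  [exists x, exists y, exists z, exists t,
     [&& A == [set x; y], B == [set z; t], uniq [:: x; y; z; t],
         s x y z != s x y t & s z t x != s z t y]].

Definition segment (T : finType) (A : {set T}) := #|A| == 2.

(* Triangulation of chi: inclusion-maximal set of pairwise non-crossing segments. *)
Definition noncrossing_family (T : finType) (cr : {set T} -> {set T} -> bool)
  (ok : {set T} -> bool) (D : {set {set T}}) :=
  [/\ forall A, A \in D -> ok A,
      forall A B, A \in D -> B \in D -> ~~ cr A B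
    & forall A, ok A -> A \notin D -> exists2 B, B \in D & cr A B].

Definition triangulation (T : finType) (chi : T -> T -> T -> bool) (D : {set {set T}}) :=
  noncrossing_family (crossb chi) (@segment T) D.

(* The ground set X ∪ {u} is T; elements of X ∪ {u, v} are option T,
   with Some x ↦ x and None ↦ the new element v. *)
Section Weak.
Variables (T : finType) (chi : T -> T -> T -> bool) (u : T).

Notation v := (None : option T).

(* chi extended by chi(x,y,v) = - chi(x,y,u), together with the values forced
   by alternating symmetry.  Values involving both u and v (or v twice) are
   undefined; they are never used by wcrossb. *)
Definition chiv (a b c : option T) : bool :=
  match a, b, c with
  | Some x, Some y, Some z => chi x y z
  | Some x, Some y, None => ~~ chi x y u
  | Some x, None, Some z => chi x z u
  | None, Some y, Some z => ~~ chi y z u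
  | _, _, _ => false
  end.

Definition wcrossb (A B : {set option T}) : bool :=
  ~~ ((Some u \in A) && (v \in B)) && ~~ ((v \in A) && (Some u \in B))
  && crossb chiv A B.

Definition wsegment (A : {set option T}) : bool :=
  (#|A| == 2) && (A != [set Some u; v]).

Definition weak_triangulation (D : {set {set option T}}) :=
  noncrossing_family wcrossb wsegment D.

Definition degree (D : {set {set option T}}) (w : option T) : nat :=
  #|[set A in D | w \in A]|.

Definition liftseg (A : {set T}) : {set option T} := [set Some y | y in A].

Definition extension (D : {set {set T}}) : {set {set option T}} :=
  [set liftseg A | A in D] :|:
  [set [set v; Some x] | x in [set x | (x != u) &&
      [forall A in D, ~~ wcrossb [set v; Some x] (liftseg A)]]].

End Weak.

(* The points other than u are totally ordered by the orientation of their triangle with u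
   (transitivity of this order is where extremality of u is used).  Call x free when the ray
   vx crosses no weak segment: by maximality every weak triangulation contains all free rays,
   so v has degree at least the number of free points.  If x is not free, some segment pq
   crossed by vx has p < x < q with x on the positive side of pq; removing the last point
   and inducting yields a hull edge ab, a < x < b, with every other point on its positive
   side.  Such an edge crosses no segment at all, so it lies in every triangulation and in
   every maximal family, and it blocks vx.  Hence the extension of a triangulation has
   exactly the free rays, some weak triangulation has only free rays (so m is the number of
   free points), and a weak triangulation whose rays are exactly the free ones is the
   extension of the triangulation formed by its segments avoiding v. *)

From mathcomp Require Import all_boot.
Set Implicit Arguments. Unset Strict Implicit. Unset Printing Implicit Defensive.

#[local] Hint Extern 0 (is_true (_ != _)) => rewrite eq_sym; assumption : core.
#[local] Hint Extern 0 (is_true (uniq _)) =>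
  by rewrite /= !inE !negb_or; repeat (apply/andP; split) : core.

Lemma exists_rel_max (T : finType) (R : rel T) (S : {set T}) :
  {in S &, forall x y, x != y -> R x y || R y x} -> {in S, irreflexive R} ->
  {in S & &, transitive R} ->
  forall x0, x0 \in S -> exists2 w, w \in S & forall s, s \in S -> s != w -> R s w.
Proof.
move=> Rtot Rirr Rtr x0 x0S.
have [w wS wmax] := arg_maxnP (fun w => #|[set s in S | R s w]|) x0S.
exists w => // s sS sw; apply: contraT => nRsw.
have Rws : R w s by move: (Rtot s w sS wS sw); rewrite (negbTE nRsw).
have : w |: [set z in S | R z w] \subset [set z in S | R z s].
  apply/subsetP => z; rewrite !inE => /orP[/eqP -> | /andP[zS Rzw]]; first by rewrite Rws andbT.
  by rewrite zS (Rtr w z s).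
move/subset_leq_card; rewrite cardsU1 inE Rirr // andbF add1n.
by move/leq_trans/(_ (wmax s sS)); rewrite ltnn.
Qed.

Lemma implyb3 (a b c d : bool) : (a -> b -> c -> d) -> [==> a, b, c => d].
Proof. by case: a b c d => [] [] [] [] //= /(_ isT isT isT). Qed.

Lemma implyb5 (a b c d e f : bool) :
  (a -> b -> c -> d -> e -> f) -> [==> a, b, c, d, e => f].
Proof. by case: a b c d e f => [] [] [] [] [] [] //= /(_ isT isT isT isT isT). Qed.

Lemma set2_eq_cases (T : finType) (a b x y : T) : x != y ->
  [set a; b] = [set x; y] -> (x = a /\ y = b) \/ (x = b /\ y = a).
Proof.
move=> xy eab.
have xab : x \in [set a; b] by rewrite eab !inE eqxx.
have yab : y \in [set a; b] by rewrite eab !inE eqxx orbT.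
case/set2P: xab yab xy => -> /set2P[]-> ab; rewrite ?eqxx in ab; by [left | right].
Qed.

Section Crossing.
Variables (T : finType) (s : T -> T -> T -> bool).

Lemma crossbP (A B : {set T}) :
  reflect (exists x y z t, [/\ A = [set x; y], B = [set z; t], uniq [:: x; y; z; t],
             s x y z != s x y t & s z t x != s z t y]) (crossb s A B).
Proof.
apply: (iffP existsP) => [[x /existsP[y /existsP[z /existsP[t]]]] | [x [y [z [t]]]]].
  by case/and5P=> /eqP hA /eqP hB *; exists x, y, z, t.
case=> hA hB *; exists x; apply/existsP; exists y; apply/existsP; exists z.
by apply/existsP; exists t; rewrite hA hB !eqxx; apply/and5P.
Qed.

Lemma crossb_sym (A B : {set T}) : crossb s A B = crossb s B A.
Proof.
by apply/crossbP/crossbP => -[x [y [z [t [hA hB hu h1 h2]]]]]; exists z, t, x, y;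
  split => //; rewrite -(rot_uniq 2).
Qed.

Lemma crossb_irr (A : {set T}) : ~~ crossb s A A.
Proof.
apply/crossbP => -[x [y [z [t [-> eA hu _ _]]]]].
have /set2P[ez|ez] : z \in [set x; y] by rewrite eA !inE eqxx.
all: by move: hu; rewrite ez /= !inE eqxx ?orbT ?andbF.
Qed.

Lemma crossb_set2 x y z t : uniq [:: x; y; z; t] ->
  s y x z = ~~ s x y z -> s y x t = ~~ s x y t ->
  s t z x = ~~ s z t x -> s t z y = ~~ s z t y ->
  crossb s [set x; y] [set z; t] = (s x y z != s x y t) && (s z t x != s z t y).
Proof.
move=> hu sx sy sz st; apply/crossbP/andP => [|[]]; last by exists x, y, z, t.
case=> x' [y' [z' [t' [exy ezt hu' h1 h2]]]].
move: hu'; rewrite /= !inE !negb_or => /and4P[/and3P[xy' _ _] /andP[_ _] zt' _].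
case: (set2_eq_cases xy' exy) => -[ex ey]; case: (set2_eq_cases zt' ezt) => -[ez et].
all: move: h1 h2; rewrite ex ey ez et ?sx ?sy ?sz ?st.
all: by case: (s x y z); case: (s x y t); case: (s z t x); case: (s z t y).
Qed.

Lemma crossb_set2_disjoint a b B : crossb s [set a; b] B ->
  exists z t, B = [set z; t] /\ uniq [:: a; b; z; t].
Proof.
case/crossbP=> x [y [z [t [eab -> hu _ _]]]]; exists z, t; split=> //.
rewrite /= !inE !negb_or in hu; case/and4P: hu => /and3P[xy xz xt] /andP[yz yt] zt _.
by case: (set2_eq_cases xy eab) => -[<- <-].
Qed.

End Crossing.

Lemma crossb_imset (T T' : finType) (s : T -> T -> T -> bool) (s' : T' -> T' -> T' -> bool)
    (f : T -> T') : injective f -> (forall x y z, s' (f x) (f y) (f z) = s x y z) ->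
  forall A B : {set T}, crossb s' (f @: A) (f @: B) = crossb s A B.
Proof.
move=> f_inj fs A B; apply/crossbP/crossbP => [|[x [y [z [t [-> -> hu h1 h2]]]]]]; last first.
  exists (f x), (f y), (f z), (f t); rewrite !imsetU1 !imset_set1 !fs.
  by split=> //; rewrite (map_inj_uniq f_inj [:: x; y; z; t]).
case=> x' [y' [z' [t' [eA eB hu h1 h2]]]].
have /imsetP[x xA ex] : x' \in f @: A by rewrite eA !inE eqxx.
have /imsetP[y yA ey] : y' \in f @: A by rewrite eA !inE eqxx orbT.
have /imsetP[z zB ez] : z' \in f @: B by rewrite eB !inE eqxx.
have /imsetP[t tB et] : t' \in f @: B by rewrite eB !inE eqxx orbT.
subst x' y' z' t'; exists x, y, z, t; rewrite -!fs -(map_inj_uniq f_inj [:: x; y; z; t]).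
split=> //; apply/setP => w.
  by rewrite -(mem_imset _ _ f_inj) eA !inE !(inj_eq f_inj).
by rewrite -(mem_imset _ _ f_inj) eB !inE !(inj_eq f_inj).
Qed.

Lemma exists_noncrossing_family (T : finType) (cr : {set T} -> {set T} -> bool)
    (ok : {set T} -> bool) :
  (forall A B, cr A B = cr B A) -> (forall A, ~~ cr A A) ->
  exists D, noncrossing_family cr ok D.
Proof.
move=> cr_sym cr_irr.
pose P (D : {set {set T}}) := [forall A in D, ok A] && [forall A in D, forall B in D, ~~ cr A B].
have [|D /andP[/forall_inP Dok /forall_inP Dnc] Dmax] :=
  arg_maxnP (fun D : {set {set T}} => #|D|) (_ : P set0).
  by apply/andP; split; apply/forall_inP => A; rewrite inE.
exists D; split=> [//|A B AD BD|A okA AnD]; first exact: (forall_inP (Dnc A AD)).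
apply/exists_inP; apply: contraT => /exists_inPn noB.
suff /Dmax : P (A |: D) by rewrite cardsU1 AnD /= add1n ltnn.
apply/andP; split; apply/forall_inP => B; rewrite in_setU1 => /orP[/eqP-> | BD] //; try exact: Dok.
all: apply/forall_inP => C; rewrite in_setU1 => /orP[/eqP-> | CD] //.
- exact: noB.
- by rewrite cr_sym noB.
- exact: (forall_inP (Dnc B BD)).
Qed.

Section WeakSegments.
Variables (T : finType) (chi : T -> T -> T -> bool) (u : T).

Definition ray (x : T) : {set option T} := [set None; Some x].

Definition unlift (B : {set option T}) : {set T} := [set z | Some z \in B].

Definition rays (D : {set {set option T}}) : {set {set option T}} :=
  [set A in D | None \in A].

Lemma liftseg2 (x y : T) : liftseg [set x; y] = [set Some x; Some y].
Proof. by rewrite /liftseg imsetU1 imset_set1. Qed.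

Lemma None_liftseg (A : {set T}) : (None \in liftseg A) = false.
Proof. by apply/negbTE/imsetP => -[]. Qed.

Lemma Some_liftseg (A : {set T}) x : (Some x \in liftseg A) = (x \in A).
Proof. exact/mem_imset/Some_inj. Qed.

Lemma liftsegK : cancel (@liftseg T) unlift.
Proof. by move=> A; apply/setP => x; rewrite inE Some_liftseg. Qed.

Lemma unliftK (B : {set option T}) : None \notin B -> liftseg (unlift B) = B.
Proof.
move=> nB; apply/setP => -[x|]; first by rewrite Some_liftseg inE.
by rewrite None_liftseg (negbTE nB).
Qed.

Lemma card_liftseg (A : {set T}) : #|liftseg A| = #|A|.
Proof. exact/card_imset/Some_inj. Qed.

Lemma wcrossb_sym (A B : {set option T}) : wcrossb chi u A B = wcrossb chi u B A.
Proof.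
rewrite /wcrossb crossb_sym.
by case: (Some u \in A); case: (Some u \in B); case: (None \in A); case: (None \in B).
Qed.

Lemma wcrossb_irr (A : {set option T}) : ~~ wcrossb chi u A A.
Proof. by rewrite /wcrossb (negbTE (crossb_irr _ _)) andbF. Qed.

Lemma wcrossb_liftseg (A B : {set T}) : wcrossb chi u (liftseg A) (liftseg B) = crossb chi A B.
Proof. by rewrite /wcrossb !None_liftseg !andbF; apply: crossb_imset; first exact: Some_inj. Qed.

Lemma ray_wsegment (x : T) : x != u -> wsegment u (ray x).
Proof.
move=> xu; rewrite /wsegment cards2 /=; apply: contra_neq xu => eu.
have : Some x \in [set Some u; None] by rewrite -eu !inE eqxx orbT.
by case/set2P => [[]|].
Qed.

Lemma liftseg_wsegment (A : {set T}) : segment A -> wsegment u (liftseg A).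
Proof.
rewrite /segment /wsegment card_liftseg => -> /=; apply/eqP => eA.
by have := None_liftseg A; rewrite eA !inE eqxx orbT.
Qed.

Lemma wsegment_card (A : {set option T}) : wsegment u A -> #|A| = 2.
Proof. by case/andP => /eqP. Qed.

Lemma wsegment_rayP (A : {set option T}) : wsegment u A -> None \in A -> exists x, A = ray x.
Proof.
move=> /wsegment_card cA vA; have /cards1P[[x|] ex] : #|A :\ None| == 1.
- by move: cA; rewrite (cardsD1 None A) vA add1n => -[->].
- by exists x; rewrite -(setD1K vA) ex.
- by have := set11 (@None T); rewrite -ex !inE eqxx.
Qed.

End WeakSegments.

Section RootedChirotope.
Variables (T : finType) (chi : T -> T -> T -> bool).
Hypothesis chi_alt : alternating_symmetry chi.

Lemma neq_distinct3 (x y z : T) : x != y -> x != z -> y != z -> distinct3 x y z.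
Proof. by move=> xy xz yz; rewrite /distinct3 /= !inE negb_or xy xz yz. Qed.

Lemma chi_yzx x y z : x != y -> x != z -> y != z -> chi y z x = chi x y z.
Proof. by move=> xy xz yz; case: (chi_alt (neq_distinct3 xy xz yz)). Qed.

Lemma chi_yxz x y z : x != y -> x != z -> y != z -> chi y x z = ~~ chi x y z.
Proof. by move=> xy xz yz; case: (chi_alt (neq_distinct3 xy xz yz)) => _ ->; rewrite negbK. Qed.

Lemma chi_zxy x y z : x != y -> x != z -> y != z -> chi z x y = chi x y z.
Proof. by move=> xy xz yz; rewrite -(chi_yzx xy xz yz) chi_yzx//. Qed.

Lemma chi_xzy x y z : x != y -> x != z -> y != z -> chi x z y = ~~ chi x y z.
Proof. by move=> xy xz yz; rewrite -(chi_zxy xy xz yz) chi_yxz//. Qed.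

Lemma chi_zyx x y z : x != y -> x != z -> y != z -> chi z y x = ~~ chi x y z.
Proof. by move=> xy xz yz; rewrite -(chi_yzx xy xz yz) chi_yxz//. Qed.

Hypotheses (chi_int : interiority chi) (chi_trans : transitivity chi).

Lemma transitivity_dual t s p q r : uniq [:: t; s; p; q; r] ->
  ~~ chi t s p -> ~~ chi t s q -> ~~ chi t s r -> chi t p q -> chi t q r -> chi t p r.
Proof.
move=> uniq5; move: (uniq5); rewrite /= !inE !negb_or.
case/and5P=> /and4P[ts tp tq tr] /and3P[sp sq sr] /andP[pq pr] qr _.
have /chi_int/implyb3 : uniq [:: t; p; r; q] by [].
have /chi_trans/implyb5 : uniq [:: r; p; t; q; s] by [].
have /chi_trans/implyb5 : uniq [:: q; r; t; p; s] by [].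
have /chi_trans/implyb5 : uniq [:: p; q; t; r; s] by [].
have /chi_int/implyb3 : uniq [:: s; p; q; r] by [].
have /chi_trans/implyb5 : uniq [:: s; t; p; q; r] by [].
rewrite [chi s t p]chi_yxz // [chi s t q]chi_yxz // [chi s t r]chi_yxz // [chi s r q]chi_xzy //
  [chi p t s]chi_zxy // [chi p t r]chi_yxz // [chi p q t]chi_yzx // [chi p q s]chi_yzx //
  [chi p r s]chi_yzx // [chi q t s]chi_zxy // [chi q t p]chi_zxy // [chi q p s]chi_zyx //
  [chi q p r]chi_yxz // [chi q r t]chi_yzx // [chi q r s]chi_yzx // [chi q r p]chi_yzx //
  [chi r t s]chi_zxy // [chi r t q]chi_zxy // [chi r p t]chi_zyx // [chi r p s]chi_zyx //
  [chi r p q]chi_zxy // [chi r q s]chi_zyx //.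
move: (chi t s p) (chi t s q) (chi t s r) (chi t p q) (chi t p r).
move: (chi t q r) (chi s p q) (chi s p r) (chi s q r) (chi p q r).
by do 10!case.
Qed.

Variable u : T.
Hypothesis u_extreme : extreme chi u.

Definition ltu a b := [&& a != u, b != u, a != b & chi u a b].

Lemma ltuP a b : ltu a b -> [/\ a != u, b != u, a != b & chi u a b].
Proof. by case/and4P. Qed.

Lemma ltuE a b : a != u -> b != u -> a != b -> ltu a b = chi u a b.
Proof. by rewrite /ltu => -> -> ->. Qed.

Lemma ltu_irr : irreflexive ltu.
Proof. by move=> a; rewrite /ltu eqxx !andbF. Qed.

Lemma ltu_total a b : a != u -> b != u -> a != b -> ltu a b || ltu b a.
Proof. by move=> au bu ab; rewrite !ltuE // [chi u b a]chi_xzy // orbN. Qed.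

Lemma ltu_asym a b : ltu a b -> ~~ ltu b a.
Proof. by case/ltuP=> au bu ab hab; rewrite ltuE // chi_xzy // hab. Qed.

Lemma ltu_trans b a c : ltu a b -> ltu b c -> ltu a c.
Proof.
move=> /ltuP[au bu ab hab] /ltuP[_ cu bc hbc].
have ac : a != c by apply: contraTneq hbc => <-; rewrite chi_xzy // hab.
rewrite ltuE //; case: u_extreme => y yu uy_const.
have cy z z' : z != u -> z != y -> z' != u -> z' != y -> chi u y z = chi u y z'.
  by move=> *; apply: uy_const; apply: neq_distinct3.
have [ey|ya] := eqVneq a y; first by subst y; rewrite (cy c b).
have [ey|yc] := eqVneq c y; first by subst y; rewrite chi_xzy // (cy a b) // -chi_xzy.
have [ey|yb] := eqVneq b y; first by subst y; move: hab; rewrite chi_xzy // (cy a c) // hbc.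
(* chi u y _ has constant sign, so transitivity or its mirror image applies with s := y. *)
case: (boolP (chi u y a)) => hya.
  by apply: (chi_trans (s := y) (q := b)); rewrite -?(cy a) //.
by apply: (transitivity_dual (s := y) (q := b)); rewrite -?(cy a).
Qed.

Lemma ltu_max (S : {set T}) x : u \notin S -> x \in S ->
  exists2 w, w \in S & forall s, s \in S -> s != w -> ltu s w.
Proof.
move=> uS; have neu z : z \in S -> z != u by move=> zS; apply: contraNneq uS => <-.
apply: exists_rel_max => [a b aS bS ab|a _|b a c _ _ _]; last exact: ltu_trans.
  by apply: ltu_total; rewrite ?neu.
exact: ltu_irr.
Qed.

Lemma exists_hull_neighbour (S : {set T}) w x : (forall s, s \in S -> ltu s w) -> x \in S ->
  exists2 c, c \in S & forall s, s \in S -> s != c -> chi w s c.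
Proof.
move=> S_lt_w xS; pose R s c := (s != c) && chi w s c.
have [|a _|b a d bS aS dS /andP[ab wab] /andP[bd wbd]|] := @exists_rel_max _ R S _ _ _ x xS.
- move=> a b /S_lt_w/ltuP[au wu aw _] /S_lt_w/ltuP[bu _ bw _] ab.
  by rewrite /R ab eq_sym ab /= [chi w b a]chi_xzy // orbN.
- by rewrite /R eqxx.
- have /ltuP[au wu aw uaw] := S_lt_w a aS; have /ltuP[bu _ bw ubw] := S_lt_w b bS.
  have /ltuP[du _ dw udw] := S_lt_w d dS.
  have ad : a != d by apply: contraTneq wbd => <-; rewrite chi_xzy // wab.
  by rewrite /R ad; apply: (chi_trans (s := u) (q := b)) => //; rewrite chi_zxy.
by move=> c cS c_max; exists c => // s sS sc; case/andP: (c_max s sS sc).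
Qed.

Definition hull_edge (S : {set T}) a b := forall s, s \in S -> s != a -> s != b -> chi a b s.

Section HullStep.
Variables (S : {set T}) (w c : T).
Hypotheses (S_lt_w : forall s, s \in S -> ltu s w) (cS : c \in S).
Hypothesis c_neighbour : forall s, s \in S -> s != c -> chi w s c.

Lemma hull_edge_neighbour : hull_edge (w |: S) c w.
Proof.
have /ltuP[cu wu cw _] := S_lt_w cS.
move=> s; rewrite in_setU1 => /orP[/eqP-> | sS] sc sw; first by rewrite eqxx in sw.
by rewrite chi_zxy // c_neighbour.
Qed.

Lemma neighbour_before_hull_edge a b x : a \in S -> b \in S -> ltu a x -> ltu x b ->
  hull_edge S a b -> ~~ chi a b w -> ltu c x.
Proof.
move=> aS bS ax xb hull_ab nabw; apply: contraT => ncx.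
have /ltuP[cu wu cw ucw] := S_lt_w cS.
have /ltuP[au _ aw uaw] := S_lt_w aS; have /ltuP[bu _ bw ubw] := S_lt_w bS.
have ac : ltu a c.
  have [<-//|xc] := eqVneq x c; have /ltuP[xu _ _ _] := xb.
  by case/orP: (ltu_total xu cu xc) => [/(ltu_trans ax)//|cx]; rewrite cx in ncx.
have /ltuP[_ _ a_c uac] := ac; have /ltuP[_ _ ab uab] := ltu_trans ax xb.
have [ecb|cb] := eqVneq c b.
  by move: nabw; rewrite -ecb chi_yzx // c_neighbour.
have abc : chi a b c by apply: hull_ab.
case/orP: (ltu_total cu bu cb) => /ltuP[_ _ _ h].
  have := @chi_trans c w u a b.
  rewrite [chi c w u]chi_yzx // [chi c w a]chi_zxy // [chi c w b]chi_zxy // [chi c u a]chi_zxy //.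
  rewrite [chi c a b]chi_zxy // [chi c u b]chi_zxy // [chi u b c]chi_xzy // h.
  by apply=> //; apply: c_neighbour.
have := @chi_trans b c u a w.
rewrite [chi b c u]chi_yzx // [chi b c a]chi_yzx // [chi b c w]chi_yzx // [chi b u a]chi_zxy //.
rewrite [chi b a w]chi_yxz // [chi b u w]chi_yxz // ubw.
by apply=> //; apply: c_neighbour.
Qed.

Lemma neighbour_before_ray p x : p \in S -> x \in S -> ltu p x -> chi p w x ->
  (forall q, q \in S -> ltu x q -> ~~ chi p q x) -> ltu c x.
Proof.
move=> pS xS px pwx no_between; apply: contraT => ncx.
have /ltuP[cu wu cw ucw] := S_lt_w cS; have /ltuP[pu _ pw _] := S_lt_w pS.
have /ltuP[xu _ xw uxw] := S_lt_w xS; have /ltuP[_ _ p_x upx] := px.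
have [exc|xc] := eqVneq x c.
  by subst x; move: pwx; rewrite chi_yxz // c_neighbour.
have {ncx} lxc : ltu x c.
  by case/orP: (ltu_total xu cu xc) => // cx; rewrite cx in ncx.
have /ltuP[_ _ _ uxc] := lxc; have /ltuP[_ _ pc _] := ltu_trans px lxc.
have := @chi_trans x c u p w.
rewrite [chi x c u]chi_yzx // [chi x c p]chi_yzx // [chi p x c]chi_xzy // [chi x c w]chi_yzx //.
rewrite [chi x u p]chi_zxy // [chi x p w]chi_zxy // [chi x u w]chi_yxz // uxw.
apply=> //; last exact: c_neighbour.
by apply: no_between; rewrite // ltuE.
Qed.

End HullStep.

(* Induction on S: with w the last point of S, either induction on S :\ w yields an edge
   keeping w on its positive side, or the edge from the hull neighbour c of w to w works. *)
Lemma exists_hull_edge (S : {set T}) x p q : u \notin S -> x \in S -> p \in S -> q \in S ->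
  ltu p x -> ltu x q -> chi p q x ->
  exists a b, [/\ a \in S, b \in S, ltu a x, ltu x b & hull_edge S a b].
Proof.
move: {2}#|S| (leqnn #|S|) => n; elim: n S x p q => [|n IH] S x p q.
  by rewrite leqn0 => /eqP/cards0_eq -> _; rewrite inE.
move=> Sn uS xS pS qS px xq pqx.
have [w wS w_max] := ltu_max uS xS.
have xw : ltu x w.
  apply: (w_max _ xS); apply: contraTneq xq => ->.
  have [->|qw] := eqVneq q w; first by rewrite ltu_irr.
  exact/ltu_asym/w_max.
have pw : p != w by apply: contraTneq px => ->; apply: ltu_asym.
set S0 := S :\ w; have eS : S = w |: S0 by rewrite setD1K.
have S0n : #|S0| <= n by move: Sn; rewrite (cardsD1 w S) wS.
have uS0 : u \notin S0 by rewrite inE (negbTE uS) andbF.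
have xS0 : x \in S0 by have /ltuP[_ _ x_w _] := xw; rewrite !inE xS x_w.
have pS0 : p \in S0 by rewrite !inE pS pw.
have S0_lt_w s : s \in S0 -> ltu s w by rewrite !inE => /andP[sw sS]; apply: w_max.
have [c cS0 c_nb] := exists_hull_neighbour S0_lt_w xS0.
have edge_cw : ltu c x -> exists a b, [/\ a \in S, b \in S, ltu a x, ltu x b & hull_edge S a b].
  move=> cx; exists c, w; rewrite eS !in_setU1 eqxx cS0 orbT; split=> //.
  exact: hull_edge_neighbour.
case: (boolP [exists p', exists q', [&& p' \in S0, q' \in S0, ltu p' x, ltu x q' & chi p' q' x]]).
  case/existsP=> p' /existsP[q' /and5P[p'S q'S p'x xq' p'q'x]].
  have [a [b [aS bS ax xb hull_ab]]] := IH S0 x p' q' S0n uS0 xS0 p'S q'S p'x xq' p'q'x.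
  have [abw|nabw] := boolP (chi a b w).
    exists a, b; rewrite eS !in_setU1 aS bS !orbT; split=> // s.
    by rewrite in_setU1 => /orP[/eqP-> //|sS]; apply: hull_ab.
  exact/edge_cw/(neighbour_before_hull_edge S0_lt_w cS0 c_nb aS bS ax xb).
move/existsPn=> none; have qw : q = w.
  apply: contraNeq (none p) => qw; apply/existsP; exists q.
  by rewrite pS0 !inE qw qS px xq pqx.
apply/edge_cw/(neighbour_before_ray S0_lt_w cS0 c_nb pS0 xS0 px); first by rewrite -qw.
move=> q' q'S xq'; apply: contraNN (none p) => pq'x; apply/existsP; exists q'.
by rewrite pS0 q'S px xq' pq'x.
Qed.

Definition uncrossable (A : {set T}) := forall B, ~~ crossb chi A B.

Lemma hull_edge_uncrossable a b :
  a != b -> (forall s, s != a -> s != b -> chi a b s) -> uncrossable [set a; b].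
Proof.
move=> ab hull B; apply/negP => cr; have [z [t [eB hu]]] := crossb_set2_disjoint cr.
rewrite /= !inE !negb_or in hu; case/and4P: hu => /and3P[_ az a_t] /andP[bz b_t] zt _.
move: cr; rewrite eB crossb_set2 //; first by rewrite !hull.
all: exact: chi_yxz.
Qed.

(* As chi(_, _, v) = - chi(_, _, u), the ray vx crosses pq iff the line xu separates p from q
   and x lies on the same side of pq as u. *)
Lemma wcrossb_ray x p q : uniq [:: u; x; p; q] ->
  wcrossb chi u (ray x) (liftseg [set p; q]) = (chi u x p != chi u x q) && (chi p q x == chi u p q).
Proof.
rewrite /= !inE !negb_or => /and4P[/and3P[ux up uq] /andP[xp xq] pq _].
rewrite /wcrossb /ray liftseg2 !inE /= !(inj_eq Some_inj) (negbTE ux) (negbTE up) (negbTE uq) /=.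
rewrite crossb_set2 /=.
- rewrite [chi x p u]chi_yzx // [chi x q u]chi_yzx // [chi p q u]chi_yzx //.
  by case: (chi u x p); case: (chi u x q); case: (chi p q x); case: (chi u p q).
- by rewrite !inE !(inj_eq Some_inj) negb_or xp xq pq.
- by rewrite negbK.
- by rewrite negbK.
- by rewrite chi_yxz.
- by rewrite chi_yxz.
Qed.

Lemma wcrossb_ray_liftseg x S : x != u -> wcrossb chi u (ray x) S ->
  exists p q, S = liftseg [set p; q] /\ uniq [:: u; x; p; q].
Proof.
move=> xu /andP[/andP[_ uS] /crossb_set2_disjoint[z [t [eS hu]]]].
case: z t eS hu => [p|] [q|] eS hu; try by rewrite /= ?inE ?eqxx ?orbT in hu.
exists p, q; rewrite liftseg2; split=> //.
rewrite eS /ray !inE eqxx /= !(inj_eq Some_inj) negb_or in uS.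
rewrite /= !inE !(inj_eq Some_inj) !negb_or in hu.
by case/and3P: hu => /andP[xp xq] pq _; case/andP: uS => up uq.
Qed.

Lemma crossing_ray_between x S : x != u -> wcrossb chi u (ray x) S ->
  exists p q, [/\ ltu p x, ltu x q & chi p q x].
Proof.
move=> xu cr; have [p [q [eS hu]]] := wcrossb_ray_liftseg xu cr.
move: cr; rewrite {}eS wcrossb_ray //.
rewrite /= !inE !negb_or in hu; case/and4P: hu => /and3P[ux up uq] /andP[xp xq] p_q _.
wlog pq : p q up uq xp xq p_q / ltu p q => [hyp|].
  have [pu qu] : p != u /\ q != u by [].
  case/orP: (ltu_total pu qu p_q) => [|qp /andP[h1 h2]]; first exact: hyp.
  apply: (hyp q p) => //; rewrite eq_sym h1 [chi q p x]chi_yxz // [chi u q p]chi_xzy //.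
  by move: h2; case: (chi p q x); case: (chi u p q).
have /ltuP[_ _ _ upq] := pq; rewrite upq => /andP[h1 /eqP pqx].
have uxp : ~~ chi u x p.
  apply/negP => uxp; move: h1; rewrite uxp /= => uxq.
  have qp : ltu q p by apply: (@ltu_trans x); rewrite ltuE // chi_xzy.
  by have := ltu_asym pq; rewrite qp.
exists p, q; rewrite !ltuE // [chi u p x]chi_xzy // uxp; split=> //.
by move: h1; rewrite (negbTE uxp); case: (chi u x q).
Qed.

Lemma ray_crosses_liftseg a x b : ltu a x -> ltu x b -> chi a b x ->
  wcrossb chi u (ray x) (liftseg [set a; b]).
Proof.
move=> ax xb abx; have /ltuP[au xu a_x uax] := ax; have /ltuP[_ bu x_b uxb] := xb.
have /ltuP[_ _ ab uab] := ltu_trans ax xb.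
by rewrite wcrossb_ray // uxb chi_xzy // uax abx uab.
Qed.

Definition free_points : {set T} :=
  [set x | (x != u) && [forall S, wsegment u S ==> ~~ wcrossb chi u (ray x) S]].

Definition free_rays : {set {set option T}} := [set ray x | x in free_points].

Lemma free_point_neq_u x : x \in free_points -> x != u.
Proof. by rewrite inE => /andP[]. Qed.

Lemma free_ray_uncrossed x S : x \in free_points -> wsegment u S -> ~~ wcrossb chi u (ray x) S.
Proof. by rewrite inE => /andP[_ /forallP/(_ S)/implyP]. Qed.

Lemma blocked_ray_crosses_uncrossable x : x != u -> x \notin free_points ->
  exists a b, [/\ a != b, wcrossb chi u (ray x) (liftseg [set a; b]) & uncrossable [set a; b]].
Proof.
move=> xu; rewrite inE xu /= => /forallPn[S]; rewrite negb_imply negbK => /andP[_ cr].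
have [p [q [px xq pqx]]] := crossing_ray_between xu cr.
have inX z : z != u -> z \in [set z | z != u] by rewrite inE.
have /ltuP[pu _ _ _] := px; have /ltuP[_ qu _ _] := xq.
have [|a [b [_ _ ax xb hull]]] := exists_hull_edge _ (inX x xu) (inX p pu) (inX q qu) px xq pqx.
  by rewrite inE eqxx.
have /ltuP[au bu ab uab] := ltu_trans ax xb.
have /ltuP[_ _ a_x _] := ax; have /ltuP[_ _ x_b _] := xb.
exists a, b; split=> //; first by apply: ray_crosses_liftseg => //; apply: hull; rewrite ?inX.
apply: (hull_edge_uncrossable ab) => s sa sb.
have [->|su] := eqVneq s u; first by rewrite chi_yzx.
by apply: hull; rewrite ?inX.
Qed.

Lemma free_rays_sub (W : {set {set option T}}) :
  weak_triangulation chi u W -> free_rays \subset rays W.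
Proof.
case=> Wseg _ Wmax; apply/subsetP => _ /imsetP[x xF ->].
rewrite inE /ray !inE eqxx andbT; apply: contraT => xW.
have [B BW] := Wmax _ (ray_wsegment (free_point_neq_u xF)) xW.
by rewrite (negbTE (free_ray_uncrossed xF (Wseg B BW))).
Qed.

Lemma free_crossing_liftseg (A : {set T}) (B : {set option T}) :
  segment A -> (None \in B -> B \in free_rays) ->
  wcrossb chi u (liftseg A) B -> exists2 B', B = liftseg B' & crossb chi A B'.
Proof.
move=> sA Bfree cr; have [vB|vB] := boolP (None \in B).
  case/imsetP: (Bfree vB) cr => x xF ->; rewrite wcrossb_sym => cr.
  by have := free_ray_uncrossed xF (liftseg_wsegment u sA); rewrite cr.
by exists (unlift B); rewrite ?unliftK // -(wcrossb_liftseg chi u) unliftK.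
Qed.

Lemma exists_weak_triangulation_free :
  exists2 F, weak_triangulation chi u F & rays F \subset free_rays.
Proof.
pose ok A := wsegment u A && ((None \in A) ==> (A \in free_rays)).
have [F [Fok Fnc Fmax]] :=
  exists_noncrossing_family ok (@wcrossb_sym T chi u) (@wcrossb_irr T chi u).
exists F; last first.
  by apply/subsetP => A; rewrite inE => /andP[/Fok/andP[_ /implyP]]; apply.
split=> [A /Fok/andP[] // | // | A wA AF].
have [vA|vA] := boolP (None \in A); last by apply: Fmax; rewrite // /ok wA (negbTE vA).
have [RA|RA] := boolP (A \in free_rays); first by apply: Fmax; rewrite // /ok wA RA implybT.
have [x eA] := wsegment_rayP wA vA; subst A.
have xu : x != u by apply: contraTneq wA => ->; rewrite /wsegment /ray setUC eqxx andbF.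
have xF : x \notin free_points by apply: contra RA => xF; apply: imset_f.
have [a [b [ab cr unc]]] := blocked_ray_crosses_uncrossable xu xF.
have sab : segment [set a; b] by rewrite /segment cards2 ab.
exists (liftseg [set a; b]) => //; apply: contraT => abF.
have [|B BF] := Fmax _ _ abF; first by rewrite /ok liftseg_wsegment // None_liftseg.
case/Fok/andP: BF => _ /implyP Bfree /(free_crossing_liftseg sab Bfree)[B' _].
by rewrite (negbTE (unc B')).
Qed.

Definition ext_points (D0 : {set {set T}}) : {set T} :=
  [set x | (x != u) && [forall A in D0, ~~ wcrossb chi u (ray x) (liftseg A)]].

Lemma extensionE (D0 : {set {set T}}) :
  extension chi u D0 = [set liftseg A | A in D0] :|: [set ray x | x in ext_points D0].
Proof. by []. Qed.

Lemma triangulation_uncrossable (D0 : {set {set T}}) a b :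
  triangulation chi D0 -> a != b -> uncrossable [set a; b] -> [set a; b] \in D0.
Proof.
case=> _ _ D0max ab unc; apply: contraT => abD0.
have [|B _] := D0max _ _ abD0; first by rewrite /segment cards2 ab.
by rewrite (negbTE (unc B)).
Qed.

Lemma ext_points_sub (D0 : {set {set T}}) :
  (forall a b, a != b -> uncrossable [set a; b] -> [set a; b] \in D0) ->
  ext_points D0 \subset free_points.
Proof.
move=> D0unc; apply/subsetP => x; rewrite inE => /andP[xu /forall_inP noX].
apply: contraT => xF; have [a [b [ab cr unc]]] := blocked_ray_crosses_uncrossable xu xF.
by rewrite (negbTE (noX _ (D0unc a b ab unc))) in cr.
Qed.

Lemma extension_rays (D0 : {set {set T}}) :
  triangulation chi D0 -> rays (extension chi u D0) \subset free_rays.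
Proof.
move=> D0tri; apply/subsetP => A; rewrite inE extensionE inE.
case/andP=> /orP[/imsetP[A' _ ->] | /imsetP[x xX ->]] vA; first by rewrite None_liftseg in vA.
apply: imset_f; apply: (subsetP (ext_points_sub _)) xX => a b.
exact: triangulation_uncrossable.
Qed.

Lemma lifted_triangulation (W : {set {set option T}}) :
  weak_triangulation chi u W -> rays W \subset free_rays ->
  triangulation chi [set A | liftseg A \in W].
Proof.
case=> Wseg Wnc Wmax Wfree; split=> [A|A B|A sA].
- by rewrite inE => /Wseg/wsegment_card; rewrite card_liftseg /segment => ->.
- by rewrite !inE -(wcrossb_liftseg chi u); apply: Wnc.
rewrite inE => AW; have [B BW cr] := Wmax _ (liftseg_wsegment u sA) AW.
have Bfree (vB : None \in B) : B \in free_rays by apply: (subsetP Wfree); rewrite inE BW.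
have [B' eB cr'] := free_crossing_liftseg sA Bfree cr.
by exists B'; rewrite // inE -eB.
Qed.

Lemma extension_lifted (W : {set {set option T}}) :
  weak_triangulation chi u W -> rays W = free_rays ->
  W = extension chi u [set A | liftseg A \in W].
Proof.
move=> Wwt WR; have [Wseg _ _] := Wwt; set D0 := [set A | liftseg A \in W].
have D0tri : triangulation chi D0 by apply: lifted_triangulation; rewrite ?WR.
rewrite extensionE; have -> : ext_points D0 = free_points.
  apply/eqP; rewrite eqEsubset ext_points_sub => [|a b]; last exact: triangulation_uncrossable.
  apply/subsetP => x xF; rewrite inE free_point_neq_u //=; apply/forall_inP => A.
  by rewrite inE => /Wseg; apply: free_ray_uncrossed.
rewrite -/free_rays -WR; apply/setP => A; rewrite in_setU.
have [vA|vA] := boolP (None \in A).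
  rewrite inE vA andbT orb_idl // => /imsetP[A' _ eA].
  by rewrite eA None_liftseg in vA.
rewrite inE (negbTE vA) andbF orbF -{2}(unliftK vA) mem_imset ?inE ?unliftK //.
exact: can_inj (@liftsegK T).
Qed.

Lemma extension_iff_free_rays (W : {set {set option T}}) : weak_triangulation chi u W ->
  (exists2 D0, triangulation chi D0 & W = extension chi u D0) <-> rays W = free_rays.
Proof.
move=> Wwt; split=> [[D0 D0tri eW] | WR].
  by apply/eqP; rewrite eqEsubset free_rays_sub // andbT eW extension_rays.
exists [set A | liftseg A \in W]; last exact: extension_lifted.
by apply: lifted_triangulation; rewrite ?WR.
Qed.

Lemma degree_free_rays (W : {set {set option T}}) : weak_triangulation chi u W ->
  (degree W None == #|free_rays|) = (rays W == free_rays).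
Proof.
move=> Wwt; rewrite [RHS]eq_sym eqEcard free_rays_sub //= eqn_leq.
by rewrite [_ <= degree _ _]subset_leq_card ?free_rays_sub ?andbT.
Qed.

Lemma min_degree_free m :
  (exists2 W, weak_triangulation chi u W & degree W None = m) ->
  (forall W, weak_triangulation chi u W -> m <= degree W None) -> m = #|free_rays|.
Proof.
move=> [W Wwt <-] Wmin; have [F Fwt Ffree] := exists_weak_triangulation_free.
apply/eqP; rewrite eqn_leq [_ <= degree _ _]subset_leq_card ?free_rays_sub // andbT.
exact: leq_trans (Wmin F Fwt) (subset_leq_card Ffree).
Qed.

End RootedChirotope.

Theorem lemma3p2 (T : finType) (chi : T -> T -> T -> bool) (u : T)
  (Hchi : chirotope chi) (Hu : extreme chi u) (m : nat)
  (Hm_att : exists2 D, weak_triangulation chi u D & degree D None = m)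
  (Hm_min : forall D, weak_triangulation chi u D -> m <= degree D None)
  (D : {set {set option T}}) (HD : weak_triangulation chi u D) :
  (exists2 D0, triangulation chi D0 & D = extension chi u D0) <->
  degree D None = m.
Proof.
case: Hchi => chi_alt chi_int chi_trans.
apply: (iff_trans (extension_iff_free_rays chi_alt chi_int chi_trans Hu HD)).
rewrite (min_degree_free chi_alt chi_int chi_trans Hu Hm_att Hm_min).
split=> /eqP; first by rewrite -(degree_free_rays HD) => /eqP.
by rewrite (degree_free_rays HD) => /eqP.
Qed.
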